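(* For any metric space $(X,d)$, any $x_0\in X$ and $n\geq 1$, the function $\rho:\pi_n(X,x_0)\times\pi_n(X,x_0)\to[0,\infty)$ is a pseudometric on $\pi_n(X,x_0)$.
   Context: $\Omega^n(X,x_0)$ is the set of continuous maps $\alpha:[0,1]^n\to X$ with $\alpha(\partial[0,1]^n)=\{x_0\}$, with uniform metric $\mu(\alpha,\beta)=\sup_{t\in[0,1]^n}d(\alpha(t),\beta(t))$. For $a,b\in\pi_n(X,x_0)$, $\rho(a,b)=\inf\{\mu(\alpha,\beta)\mid\alpha\in a,\beta\in b\}$. *)

From Stdlib Require Import Reals.
From Coquelicot Require Import Coquelicot.
Open Scope R_scope.

Definition is_metric {X : Type} (d : X -> X -> R) : Prop :=
  (forall x y, 0 <= d x y) /\
  (forall x y, d x y = 0 <-> x = y) /\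
  (forall x y, d x y = d y x) /\
  (forall x y z, d x z <= d x y + d y z).

(* Points of R^n are represented as t : nat -> R with t i = 0 for i >= n;
   cube n t  <->  t is a point of [0,1]^n. *)
Definition cube (n : nat) (t : nat -> R) : Prop :=
  (forall i, (i < n)%nat -> 0 <= t i <= 1) /\ (forall i, (n <= i)%nat -> t i = 0).

Definition cube_bd (n : nat) (t : nat -> R) : Prop :=
  cube n t /\ exists i, (i < n)%nat /\ (t i = 0 \/ t i = 1).

Definition cont_on_cube {X : Type} (d : X -> X -> R) (n : nat)
  (alpha : (nat -> R) -> X) : Prop :=
  forall t, cube n t -> forall eps, 0 < eps -> exists delta, 0 < delta /\
    forall s, cube n s -> (forall i, (i < n)%nat -> Rabs (s i - t i) < delta) ->
      d (alpha s) (alpha t) < eps.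

Definition Omega {X : Type} (d : X -> X -> R) (x0 : X) (n : nat)
  (alpha : (nat -> R) -> X) : Prop :=
  cont_on_cube d n alpha /\ forall t, cube_bd n t -> alpha t = x0.

Definition homotopic {X : Type} (d : X -> X -> R) (x0 : X) (n : nat)
  (alpha beta : (nat -> R) -> X) : Prop :=
  exists H : R -> (nat -> R) -> X,
    (forall s t, 0 <= s <= 1 -> cube n t -> forall eps, 0 < eps ->
       exists delta, 0 < delta /\ forall s' t', 0 <= s' <= 1 -> cube n t' ->
         Rabs (s' - s) < delta -> (forall i, (i < n)%nat -> Rabs (t' i - t i) < delta) ->
         d (H s' t') (H s t) < eps) /\
    (forall t, cube n t -> H 0 t = alpha t) /\
    (forall t, cube n t -> H 1 t = beta t) /\
    (forall s t, 0 <= s <= 1 -> cube_bd n t -> H s t = x0).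

Definition is_htpy_class {X : Type} (d : X -> X -> R) (x0 : X) (n : nat)
  (A : ((nat -> R) -> X) -> Prop) : Prop :=
  exists alpha, Omega d x0 n alpha /\
    A = (fun beta => Omega d x0 n beta /\ homotopic d x0 n alpha beta).

Definition pi_n {X : Type} (d : X -> X -> R) (x0 : X) (n : nat) : Type :=
  { A : ((nat -> R) -> X) -> Prop | is_htpy_class d x0 n A }.

Definition mu {X : Type} (d : X -> X -> R) (n : nat) (alpha beta : (nat -> R) -> X) : Rbar :=
  Lub_Rbar (fun r => exists t, cube n t /\ r = d (alpha t) (beta t)).

Definition rho {X : Type} (d : X -> X -> R) (x0 : X) (n : nat) (a b : pi_n d x0 n) : Rbar :=
  Rbar_glb (fun m => exists alpha beta,
    proj1_sig a alpha /\ proj1_sig b beta /\ m = mu d n alpha beta).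

From Stdlib Require Import Reals RList Lra Lia List ClassicalEpsilon FunctionalExtensionality.
From Coquelicot Require Import Coquelicot.
Open Scope R_scope.

(* Finiteness of [rho] comes from the boundedness of continuous maps on the compact cube, and
   [rho a a = 0] and symmetry are inherited from [mu]. For the triangle inequality take [alpha]
   in [a], [beta], [beta'] in [b] and [gamma] in [c]. Concatenating along the first coordinate,
   [alpha . beta^-1 . x0 . beta'] still lies in [a], because [beta^-1 . beta'] contracts through a
   homotopy from [beta] to [beta'], and [beta . beta^-1 . x0 . gamma] still lies in [c]. Quarter
   by quarter these two maps are at distance at most [mu alpha beta], 0, 0 and [mu beta' gamma],
   so [rho a c <= mu alpha beta + mu beta' gamma]. *)

Definition upd (t : nat -> R) (k : nat) (v : R) : nat -> R :=
  fun i => if Nat.eqb i k then v else t i.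

Lemma upd_eq t k v : upd t k v k = v.
Proof. unfold upd. now rewrite Nat.eqb_refl. Qed.

Lemma upd_neq t k v i : i <> k -> upd t k v i = t i.
Proof. intros Hik. unfold upd. now rewrite (proj2 (Nat.eqb_neq i k) Hik). Qed.

Lemma upd_same t k : upd t k (t k) = t.
Proof.
  apply functional_extensionality. intros i.
  destruct (Nat.eq_dec i k) as [->|Hik]; [apply upd_eq | now apply upd_neq].
Qed.

(** * Compactness of the cube *)

Lemma cube_zero n : cube n (fun _ => 0).
Proof. split; intros; lra. Qed.

Lemma interval_finite_cover (eta : R -> R) : (forall u, 0 < eta u) ->
  exists l : list R, (forall u, In u l -> 0 <= u <= 1) /\
    forall v, 0 <= v <= 1 -> exists u, In u l /\ Rabs (v - u) < eta u.
Proof.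
  intros Heta.
  set (ball u v := 0 <= u <= 1 /\ Rabs (v - u) < eta u).
  assert (Hind : forall u, (exists v, ball u v) -> 0 <= u <= 1) by (intros u [v [Hu _]]; exact Hu).
  destruct (compact_P3 0 1 (mkfamily _ ball Hind)) as [D [Hcov [l Hl]]].
  - split.
    + intros u Hu. exists u. split; [exact Hu|]. rewrite Rminus_diag, Rabs_R0. apply Heta.
    + intros u v [Hu Hv]. simpl in Hv.
      assert (Hr : 0 < eta u - Rabs (v - u)) by lra.
      exists (mkposreal _ Hr). intros w Hw. unfold disc in Hw. simpl in *. split; [exact Hu|].
      pose proof (Rabs_triang (w - v) (v - u)). replace (w - v + (v - u)) with (w - u) in * by ring.
      lra.
  - exists l. split.
    + intros u Hu. apply Hl in Hu. exact (proj1 Hu).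
    + intros v Hv. destruct (Hcov v Hv) as [u [[Hu Huv] HDu]].
      exists u. split; [apply Hl; split|]; auto.
Qed.

(* By induction on [n]: cover the first [n] coordinates for each value [u] of the last one, then
   cover [[0, 1]] in [u], with radius at [u] the least radius used in the cover for [u]. *)
Lemma cube_finite_cover n (delta : (nat -> R) -> R) : (forall t, 0 < delta t) ->
  exists l : list (nat -> R), (forall t, In t l -> cube n t) /\
    forall s, cube n s -> exists t, In t l /\ forall i, (i < n)%nat -> Rabs (s i - t i) < delta t.
Proof.
  revert delta. induction n as [|n IH]; intros delta Hdelta.
  - exists ((fun _ => 0) :: nil). split.
    + intros t [<-|[]]. apply cube_zero.
    + intros s _. exists (fun _ => 0). split; [now left | intros; lia].
  - destruct (choice (fun (u : R) l => (forall t, In t l -> cube n t) /\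
        forall s, cube n s -> exists t, In t l /\
          forall i, (i < n)%nat -> Rabs (s i - t i) < delta (upd t n u)))
      as [L HL].
    { intros u. exact (IH (fun t => delta (upd t n u)) (fun t => Hdelta _)). }
    set (eta u := MinRlist (map (fun t => delta (upd t n u)) (L u))).
    destruct (interval_finite_cover eta) as [lu [Hlu Hcover]].
    { intros u. apply MinRlist_P2. intros r Hr. apply in_map_iff in Hr.
      destruct Hr as [t [<- _]]. apply Hdelta. }
    exists (flat_map (fun u => map (fun t => upd t n u) (L u)) lu). split.
    + intros T HT. apply in_flat_map in HT. destruct HT as [u [Hu HT]].
      apply in_map_iff in HT. destruct HT as [t [<- Ht]].
      destruct (proj1 (HL u) t Ht) as [Ht1 Ht2]. specialize (Hlu u Hu).
      split; intros i Hi; unfold upd; destruct (Nat.eqb_spec i n);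
        try lia; auto; [apply Ht1 | apply Ht2]; lia.
    + intros s [Hs1 Hs2].
      destruct (Hcover (s n)) as [u [Hu Hsu]]; [apply Hs1; lia|].
      destruct (proj2 (HL u) (upd s n 0)) as [t [Ht Hst]].
      { split; intros i Hi; unfold upd; destruct (Nat.eqb_spec i n);
          try lia; try lra; [apply Hs1 | apply Hs2]; lia. }
      exists (upd t n u). split.
      * apply in_flat_map. exists u. split; [exact Hu|]. apply in_map_iff. now exists t.
      * intros i Hi. destruct (Nat.eq_dec i n) as [->|Hin].
        -- rewrite upd_eq. eapply Rlt_le_trans; [exact Hsu|].
           apply MinRlist_P1, in_map_iff. now exists t.
        -- rewrite upd_neq by exact Hin.
           specialize (Hst i ltac:(lia)). now rewrite upd_neq in Hst.
Qed.

Lemma cont_on_cube_bounded {X : Type} (d : X -> X -> R) n (alpha : (nat -> R) -> X) (y : X) :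
  is_metric d -> cont_on_cube d n alpha ->
  exists B, forall t, cube n t -> d (alpha t) y <= B.
Proof.
  intros (_ & _ & _ & Htri) Hcont.
  destruct (choice (fun t del => 0 < del /\ (cube n t -> forall s, cube n s ->
      (forall i, (i < n)%nat -> Rabs (s i - t i) < del) -> d (alpha s) (alpha t) < 1)))
    as [del Hdel].
  { intros t. destruct (classic (cube n t)) as [Ht|Ht].
    - destruct (Hcont t Ht 1 Rlt_0_1) as [del [Hpos H]]. now exists del.
    - exists 1. split; [lra | contradiction]. }
  destruct (cube_finite_cover n del (fun t => proj1 (Hdel t))) as [l [Hl Hcover]].
  exists (1 + MaxRlist (map (fun t => d (alpha t) y) l)).
  intros s Hs. destruct (Hcover s Hs) as [t [Ht Hst]].
  pose proof (proj2 (Hdel t) (Hl t Ht) s Hs Hst).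
  assert (d (alpha t) y <= MaxRlist (map (fun t => d (alpha t) y) l)).
  { apply MaxRlist_P1, in_map_iff. now exists t. }
  pose proof (Htri (alpha s) (alpha t) y). lra.
Qed.

(** * Joint continuity in the time and cube variables *)

Lemma Rabs_mult_sub_lt a b x y e : 0 < e <= 1 -> Rabs (x - a) < e -> Rabs (y - b) < e ->
  Rabs (x * y - a * b) < e * (1 + Rabs a + Rabs b).
Proof.
  intros He Hx Hy.
  replace (x * y - a * b) with ((x - a) * (y - b) + (a * (y - b) + b * (x - a))) by ring.
  pose proof (Rabs_triang ((x - a) * (y - b)) (a * (y - b) + b * (x - a))).
  pose proof (Rabs_triang (a * (y - b)) (b * (x - a))).
  rewrite !Rabs_mult in *.
  pose proof (Rabs_pos (x - a)). pose proof (Rabs_pos (y - b)).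
  pose proof (Rabs_pos a). pose proof (Rabs_pos b).
  assert (Rabs (x - a) * Rabs (y - b) < e * 1) by (apply Rmult_le_0_lt_compat; lra).
  assert (Rabs a * Rabs (y - b) <= Rabs a * e) by (apply Rmult_le_compat_l; lra).
  assert (Rabs b * Rabs (x - a) <= Rabs b * e) by (apply Rmult_le_compat_l; lra).
  nra.
Qed.

Section Joint_continuity.

Variable n : nat.

Definition close (del s : R) (t : nat -> R) (s' : R) (t' : nat -> R) : Prop :=
  Rabs (s' - s) < del /\ forall i, (i < n)%nat -> Rabs (t' i - t i) < del.

Definition near (E : R -> (nat -> R) -> Prop) (s : R) (t : nat -> R)
    (P : R -> (nat -> R) -> Prop) : Prop :=
  exists del, 0 < del /\ forall s' t', E s' t' -> close del s t s' t' -> P s' t'.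

Definition jcont {X : Type} (d : X -> X -> R) (E : R -> (nat -> R) -> Prop)
    (F : R -> (nat -> R) -> X) : Prop :=
  forall s t, E s t -> forall eps, 0 < eps -> near E s t (fun s' t' => d (F s' t') (F s t) < eps).

Definition jcontV (E : R -> (nat -> R) -> Prop) (q : R -> (nat -> R) -> nat -> R) : Prop :=
  forall s t, E s t -> forall eps, 0 < eps -> near E s t
    (fun s' t' => forall i, (i < n)%nat -> Rabs (q s' t' i - q s t i) < eps).

Variable E : R -> (nat -> R) -> Prop.

Lemma near_impl s t (P Q : R -> (nat -> R) -> Prop) :
  (forall s' t', E s' t' -> P s' t' -> Q s' t') -> near E s t P -> near E s t Q.
Proof. intros HPQ [del [Hdel HP]]. exists del. split; auto. Qed.

Lemma near_and s t P Q :
  near E s t P -> near E s t Q -> near E s t (fun s' t' => P s' t' /\ Q s' t').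
Proof.
  intros [d1 [Hd1 HP]] [d2 [Hd2 HQ]]. exists (Rmin d1 d2). split; [now apply Rmin_glb_lt|].
  intros s' t' Hst [Hs Ht].
  split; [apply HP | apply HQ]; auto; split; intros; eapply Rlt_le_trans;
    eauto using Rmin_l, Rmin_r.
Qed.

Lemma near_close s t del : 0 < del -> near E s t (close del s t).
Proof. intros Hdel. now exists del. Qed.

Lemma near_restrict (g : R -> (nat -> R) -> Prop) s t P :
  near (fun s t => E s t /\ g s t) s t P -> near E s t (fun s' t' => g s' t' -> P s' t').
Proof. intros [del [Hdel HP]]. exists del. split; auto. Qed.

Notation jcontR := (jcont Rdist).

Lemma jcontR_const c : jcontR E (fun _ _ => c).
Proof.
  intros s t _ eps Heps. exists 1. split; [lra|].
  intros. unfold Rdist. now rewrite Rminus_diag, Rabs_R0.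
Qed.

Lemma jcontR_fst : jcontR E (fun s _ => s).
Proof. intros s t _ eps Heps. now exists eps; split; [|intros ? ? _ []]. Qed.

Lemma jcontR_coord i : (i < n)%nat -> jcontR E (fun _ t => t i).
Proof.
  intros Hi s t _ eps Heps. exists eps. split; [exact Heps | intros ? ? _ [_ Ht]; now apply Ht].
Qed.

Lemma jcontR_add f g : jcontR E f -> jcontR E g -> jcontR E (fun s t => f s t + g s t).
Proof.
  intros Hf Hg s t Hst eps Heps.
  pose proof (near_and _ _ _ _ (Hf s t Hst (eps / 2) ltac:(lra)) (Hg s t Hst (eps / 2) ltac:(lra))).
  eapply near_impl; [| eassumption].
  intros s' t' _ [H1 H2]. pose proof (Rdist_plus (f s' t') (f s t) (g s' t') (g s t)). lra.
Qed.

Lemma jcontR_opp f : jcontR E f -> jcontR E (fun s t => - f s t).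
Proof.
  intros Hf s t Hst eps Heps. eapply near_impl; [| exact (Hf s t Hst eps Heps)].
  intros s' t' _. unfold Rdist. now replace (- f s' t' - - f s t) with (- (f s' t' - f s t))
    by ring; rewrite Rabs_Ropp.
Qed.

Lemma jcontR_mul f g : jcontR E f -> jcontR E g -> jcontR E (fun s t => f s t * g s t).
Proof.
  intros Hf Hg s t Hst eps Heps.
  set (K := 1 + Rabs (f s t) + Rabs (g s t)).
  assert (HK : 0 < K).
  { unfold K. pose proof (Rabs_pos (f s t)). pose proof (Rabs_pos (g s t)). lra. }
  set (e := Rmin 1 (eps / K)).
  assert (He : 0 < e <= 1).
  { split; [apply Rmin_glb_lt; [lra | now apply Rdiv_lt_0_compat] | apply Rmin_l]. }
  assert (HeK : e * K <= eps).
  { apply (Rmult_le_reg_r (/ K)); [now apply Rinv_0_lt_compat|].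
    rewrite Rmult_assoc, Rinv_r, Rmult_1_r by lra. apply Rmin_r. }
  pose proof (near_and _ _ _ _ (Hf s t Hst e (proj1 He)) (Hg s t Hst e (proj1 He))).
  eapply near_impl; [| eassumption].
  intros s' t' _ [H1 H2]. unfold Rdist in *.
  pose proof (Rabs_mult_sub_lt _ _ _ _ _ He H1 H2). unfold K in HeK. lra.
Qed.

Lemma jcontV_snd : jcontV E (fun _ t => t).
Proof. intros s t _ eps Heps. exists eps. split; [exact Heps | now intros ? ? _ [_ Ht]]. Qed.

Lemma jcontV_upd k v : jcontR E v -> jcontV E (fun s t => upd t k (v s t)).
Proof.
  intros Hv s t Hst eps Heps.
  eapply near_impl; [| exact (near_and _ _ _ _ (Hv s t Hst eps Heps) (near_close s t eps Heps))].
  intros s' t' _ [H1 [_ H2]] i Hi. unfold upd.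
  destruct (Nat.eqb i k); [exact H1 | exact (H2 i Hi)].
Qed.

Lemma jcont_comp {X : Type} (d : X -> X -> R) (D : R -> (nat -> R) -> Prop) F p q :
  jcont d D F -> jcontR E p -> jcontV E q -> (forall s t, E s t -> D (p s t) (q s t)) ->
  jcont d E (fun s t => F (p s t) (q s t)).
Proof.
  intros HF Hp Hq HD s t Hst eps Heps.
  destruct (HF _ _ (HD s t Hst) eps Heps) as [del [Hdel HFdel]].
  eapply near_impl; [| exact (near_and _ _ _ _ (Hp s t Hst del Hdel) (Hq s t Hst del Hdel))].
  intros s' t' Hst' [Hp' Hq']. apply HFdel; [now apply HD | split; assumption].
Qed.

Lemma jcont_paste {X : Type} (d : X -> X -> R) a b F1 F2 :
  jcontR E a -> jcontR E b ->
  jcont d (fun s t => E s t /\ a s t <= b s t) F1 ->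
  jcont d (fun s t => E s t /\ b s t <= a s t) F2 ->
  (forall s t, E s t -> a s t = b s t -> F1 s t = F2 s t) ->
  jcont d E (fun s t => if Rle_dec (a s t) (b s t) then F1 s t else F2 s t).
Proof.
  intros Ha Hb H1 H2 H12 s t Hst eps Heps.
  assert (Hg : jcontR E (fun s t => a s t + - b s t)) by now apply jcontR_add, jcontR_opp.
  destruct (Rtotal_order (a s t) (b s t)) as [Hlt | [Heq | Hgt]].
  - pose proof (near_restrict _ _ _ _ (H1 s t (conj Hst (Rlt_le _ _ Hlt)) eps Heps)) as N1.
    eapply near_impl; [| exact (near_and _ _ _ _ N1 (Hg s t Hst (b s t - a s t) ltac:(lra)))].
    intros s' t' _ [A1 Hg']. apply Rabs_def2 in Hg'.
    destruct (Rle_dec (a s t) (b s t)); [| lra].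
    destruct (Rle_dec (a s' t') (b s' t')); [auto | lra].
  - pose proof (near_restrict _ _ _ _ (H1 s t (conj Hst (Req_le _ _ Heq)) eps Heps)) as N1.
    pose proof (near_restrict _ _ _ _ (H2 s t (conj Hst (Req_le _ _ (eq_sym Heq))) eps Heps)) as N2.
    eapply near_impl; [| exact (near_and _ _ _ _ N1 N2)].
    intros s' t' _ [A1 A2]. destruct (Rle_dec (a s t) (b s t)); [| lra].
    destruct (Rle_dec (a s' t') (b s' t')); [auto |]. rewrite H12 by assumption. apply A2. lra.
  - pose proof (near_restrict _ _ _ _ (H2 s t (conj Hst (Rlt_le _ _ Hgt)) eps Heps)) as N2.
    eapply near_impl; [| exact (near_and _ _ _ _ N2 (Hg s t Hst (a s t - b s t) ltac:(lra)))].
    intros s' t' _ [A2 Hg']. apply Rabs_def2 in Hg'.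
    destruct (Rle_dec (a s t) (b s t)); [lra |]. destruct (Rle_dec (a s' t') (b s' t')); [lra |].
    apply A2. lra.
Qed.

End Joint_continuity.

(** * Homotopies and concatenation along the first coordinate *)

Section Homotopy.

Variables (X : Type) (d : X -> X -> R) (x0 : X) (n : nat).

Definition cyl (lo s : R) (t : nat -> R) : Prop := lo <= s <= 1 /\ cube n t.

Definition is_htpy (H : R -> (nat -> R) -> X) (f g : (nat -> R) -> X) : Prop :=
  jcont n d (cyl 0) H /\
  (forall t, cube n t -> H 0 t = f t) /\ (forall t, cube n t -> H 1 t = g t) /\
  (forall s t, 0 <= s <= 1 -> cube_bd n t -> H s t = x0).

Lemma homotopic_iff f g : homotopic d x0 n f g <-> exists H, is_htpy H f g.
Proof.
  split; intros [H (Hc & H0 & H1 & Hbd)]; exists H; (split; [|auto]).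
  - intros s t [Hs Ht] eps Heps. destruct (Hc s t Hs Ht eps Heps) as [del [Hdel Hnear]].
    exists del. split; [exact Hdel|]. intros s' t' [Hs' Ht'] [Hss Htt]. auto.
  - intros s t Hs Ht eps Heps. destruct (Hc s t (conj Hs Ht) eps Heps) as [del [Hdel Hnear]].
    exists del. split; [exact Hdel|]. intros s' t' Hs' Ht' Hss Htt. apply Hnear; split; auto.
Qed.

Lemma homotopic_refl f : Omega d x0 n f -> homotopic d x0 n f f.
Proof.
  intros [Hc Hbd]. apply homotopic_iff. exists (fun _ t => f t).
  repeat split; auto. intros s t [_ Ht] eps Heps.
  destruct (Hc t Ht eps Heps) as [del [Hdel Hf]].
  exists del. split; [exact Hdel|]. intros s' t' [_ Ht'] [_ Htt]. auto.
Qed.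

Lemma homotopic_Omega f g : homotopic d x0 n f g -> Omega d x0 n g.
Proof.
  intros Hfg. apply homotopic_iff in Hfg. destruct Hfg as [H (Hc & _ & H1 & Hbd)]. split.
  - intros t Ht eps Heps.
    destruct (Hc 1 t (conj (conj Rle_0_1 (Rle_refl 1)) Ht) eps Heps) as [del [Hdel Hnear]].
    exists del. split; [exact Hdel|]. intros s Hs Hst. rewrite <- !H1 by assumption.
    apply Hnear; [split; [lra | assumption] | split; [rewrite Rminus_diag, Rabs_R0 | ]; auto].
  - intros t Ht. rewrite <- H1 by apply Ht. apply Hbd; [lra | exact Ht].
Qed.

End Homotopy.

Section Concatenation.

Variables (X : Type) (d : X -> X -> R) (x0 : X) (n : nat).
Hypothesis hd : is_metric d.
Hypothesis hn : (1 <= n)%nat.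

Lemma cube_coord0 t : cube n t -> 0 <= t 0%nat <= 1.
Proof. intros [Ht _]. apply Ht. lia. Qed.

Lemma cube_upd0 t v : cube n t -> 0 <= v <= 1 -> cube n (upd t 0 v).
Proof.
  intros [Ht1 Ht2] Hv.
  split; intros i Hi; (destruct (Nat.eq_dec i 0) as [->|Hi0];
    [rewrite upd_eq; auto; lia | rewrite upd_neq by exact Hi0; auto]).
Qed.

Definition side_face (t : nat -> R) : Prop :=
  exists i, (0 < i < n)%nat /\ (t i = 0 \/ t i = 1).

Lemma cube_bd_cases t : cube_bd n t -> side_face t \/ t 0%nat = 0 \/ t 0%nat = 1.
Proof.
  intros [_ [i [Hi Hti]]]. destruct (Nat.eq_dec i 0) as [->|Hi0]; [now right|].
  left. exists i. split; [lia | exact Hti].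
Qed.

Lemma cube_bd_upd0 t v :
  cube n t -> 0 <= v <= 1 -> side_face t \/ v = 0 \/ v = 1 -> cube_bd n (upd t 0 v).
Proof.
  intros Ht Hv Hface. split; [now apply cube_upd0|].
  destruct Hface as [[i [Hi Hti]] | Hv01].
  - exists i. split; [lia|]. now rewrite upd_neq by lia.
  - exists 0%nat. split; [lia|]. now rewrite upd_eq.
Qed.

Lemma jcont_const E (x : X) : jcont n d E (fun _ _ => x).
Proof.
  intros s t _ eps Heps. exists 1. split; [lra|].
  intros. destruct hd as (_ & Hd0 & _). now rewrite (proj2 (Hd0 x x) eq_refl).
Qed.

(* [u = stretch s t] is the first coordinate rescaled to [0, 1 + 3 s]: the homotopies below
   spend the extra length [3 s] on the appended or prepended pieces. *)
Definition stretch (s : R) (t : nat -> R) : R := t 0%nat * (1 + 3 * s).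

Lemma stretch_bounds s t : 0 <= s <= 1 -> cube n t -> 0 <= stretch s t <= 1 + 3 * s.
Proof. intros Hs Ht. pose proof (cube_coord0 t Ht). unfold stretch. split; nra. Qed.

Lemma stretch_bd_cases s t :
  cube_bd n t -> side_face t \/ stretch s t = 0 \/ stretch s t = 1 + 3 * s.
Proof.
  intros Hbd. unfold stretch.
  destruct (cube_bd_cases t Hbd) as [|[-> | ->]]; auto; right; [left | right]; ring.
Qed.

Definition chain (f g h : (nat -> R) -> X) (t : nat -> R) : X :=
  let u := 4 * t 0%nat in
  if Rle_dec u 1 then f (upd t 0 u)
  else if Rle_dec u 2 then g (upd t 0 (2 - u))
  else if Rle_dec u 3 then x0
  else h (upd t 0 (u - 3)).

Lemma chain_dist f f' g h h' M1 M2 : 0 <= M1 -> 0 <= M2 ->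
  (forall t, cube n t -> d (f t) (f' t) <= M1) -> (forall t, cube n t -> d (h t) (h' t) <= M2) ->
  forall t, cube n t -> d (chain f g h t) (chain f' g h' t) <= M1 + M2.
Proof.
  intros HM1 HM2 Hf Hh t Ht. pose proof (cube_coord0 t Ht).
  destruct hd as (_ & Hd0 & _). unfold chain.
  repeat destruct (Rle_dec _ _); try (rewrite (proj2 (Hd0 _ _) eq_refl); lra).
  - pose proof (Hf (upd t 0 (4 * t 0%nat)) ltac:(apply cube_upd0; [exact Ht | lra])). lra.
  - pose proof (Hh (upd t 0 (4 * t 0%nat - 3)) ltac:(apply cube_upd0; [exact Ht | lra])). lra.
Qed.

Variables (a0 b0 c0 alpha beta beta' gamma : (nat -> R) -> X).
Variables (Ha Hb Hb' Hc : R -> (nat -> R) -> X).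
Hypothesis hHa : is_htpy X d x0 n Ha a0 alpha.
Hypothesis hHb : is_htpy X d x0 n Hb b0 beta.
Hypothesis hHb' : is_htpy X d x0 n Hb' b0 beta'.
Hypothesis hHc : is_htpy X d x0 n Hc c0 gamma.

Definition glue (h : R) (t : nat -> R) : X := if Rle_dec h 0 then Hb (- h) t else Hb' h t.

Lemma glue_bd h t : -1 <= h <= 1 -> cube_bd n t -> glue h t = x0.
Proof.
  intros Hh Ht. destruct hHb as (_ & _ & _ & Hbd), hHb' as (_ & _ & _ & Hbd').
  unfold glue. destruct (Rle_dec h 0); [apply Hbd | apply Hbd']; auto; lra.
Qed.

Lemma jcont_glue : jcont n d (cyl n (-1)) glue.
Proof.
  destruct hHb as (Hcont & H0 & _), hHb' as (Hcont' & H0' & _).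
  apply jcont_paste.
  - apply jcontR_fst.
  - apply jcontR_const.
  - apply (jcont_comp _ _ _ (cyl n 0) Hb (fun h _ => - h) (fun _ t => t));
      [exact Hcont | apply jcontR_opp, jcontR_fst | apply jcontV_snd |].
    intros h t [[Hh Ht] Hle]. split; [lra | exact Ht].
  - apply (jcont_comp _ _ _ (cyl n 0) Hb' (fun h _ => h) (fun _ t => t));
      [exact Hcont' | apply jcontR_fst | apply jcontV_snd |].
    intros h t [[Hh Ht] Hle]. split; [lra | exact Ht].
  - intros h t [_ Ht] ->. rewrite Ropp_0, H0, H0'; auto.
Qed.

Ltac solve_jcontR := unfold stretch; repeat first
  [ apply jcontR_const | apply jcontR_fst | apply jcontR_coord; lia
  | apply jcontR_add | apply jcontR_opp | apply jcontR_mul ].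

Ltac solve_domain :=
  let s := fresh "s" in let t := fresh "t" in let Hdom := fresh "Hdom" in
  intros s t Hdom; unfold cyl in Hdom; decompose [and] Hdom;
  pose proof (stretch_bounds s t ltac:(lra) ltac:(assumption));
  split; [lra | apply cube_upd0; [assumption | lra]].

(* At time [s], [Ha s] occupies [u <= 1]; beyond it the argument [(h, first coordinate)] of
   [glue] runs down from [(-s, 1)] to [(-s, 1 - s)], across to [(s, 1 - s)] and up to [(s, 1)].
   At [s = 1] the crossing happens at height 0, where [glue] is [x0]. *)
Definition append_htpy (s : R) (t : nat -> R) : X :=
  let u := stretch s t in
  if Rle_dec u 1 then Ha s (upd t 0 u)
  else if Rle_dec u (1 + s) then glue (- s) (upd t 0 (2 - u))
  else if Rle_dec u (1 + 2 * s) then glue (2 * u - 2 - 3 * s) (upd t 0 (1 - s))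
  else glue s (upd t 0 (u - 3 * s)).

Lemma jcont_append : jcont n d (cyl n 0) append_htpy.
Proof.
  destruct hHa as (HcA & _ & _ & HbdA).
  unfold append_htpy; cbv zeta.
  apply jcont_paste; [solve_jcontR | solve_jcontR | | |].
  - apply (jcont_comp _ _ _ (cyl n 0) Ha (fun s _ => s) (fun s t => upd t 0 (stretch s t)));
      [exact HcA | apply jcontR_fst | apply jcontV_upd; solve_jcontR | solve_domain].
  - apply jcont_paste; [solve_jcontR | solve_jcontR | | |].
    + apply (jcont_comp _ _ _ (cyl n (-1)) glue (fun s _ => - s)
        (fun s t => upd t 0 (2 - stretch s t)));
        [exact jcont_glue | solve_jcontR | apply jcontV_upd; solve_jcontR | solve_domain].
    + apply jcont_paste; [solve_jcontR | solve_jcontR | | |].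
      * apply (jcont_comp _ _ _ (cyl n (-1)) glue (fun s t => 2 * stretch s t - 2 - 3 * s)
          (fun s t => upd t 0 (1 - s)));
          [exact jcont_glue | solve_jcontR | apply jcontV_upd; solve_jcontR | solve_domain].
      * apply (jcont_comp _ _ _ (cyl n (-1)) glue (fun s _ => s)
          (fun s t => upd t 0 (stretch s t - 3 * s)));
          [exact jcont_glue | solve_jcontR | apply jcontV_upd; solve_jcontR | solve_domain].
      * intros s t _ ->. f_equal; [lra | f_equal; lra].
    + intros s t [[Hs _] _] ->. destruct (Rle_dec _ _); [| lra]. f_equal; [lra | f_equal; lra].
  - intros s t [Hs Ht] ->. destruct (Rle_dec _ _); [| lra].
    rewrite HbdA, glue_bd; auto; try lra; apply cube_bd_upd0; auto; lra.
Qed.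

Lemma append_htpy_bd s t : 0 <= s <= 1 -> cube_bd n t -> append_htpy s t = x0.
Proof.
  intros Hs Hbd. destruct hHa as (_ & _ & _ & HbdA). pose proof (proj1 Hbd) as Ht.
  pose proof (stretch_bounds s t Hs Ht).
  pose proof (stretch_bd_cases s t Hbd) as Hface.
  unfold append_htpy; cbv zeta.
  repeat destruct (Rle_dec _ _);
    first [apply HbdA | apply glue_bd]; try lra; apply cube_bd_upd0; auto;
    try lra; destruct Hface as [|[|]]; auto; right; lra.
Qed.

Lemma append_htpy_0 t : cube n t -> append_htpy 0 t = a0 t.
Proof.
  intros Ht. destruct hHa as (_ & HA0 & _).
  pose proof (cube_coord0 t Ht). unfold append_htpy, stretch; cbv zeta.
  rewrite Rmult_0_r, Rplus_0_r, Rmult_1_r, upd_same.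
  destruct (Rle_dec _ _); [auto | lra].
Qed.

Lemma append_htpy_1 t : cube n t -> append_htpy 1 t = chain alpha beta beta' t.
Proof.
  intros Ht. destruct hHa as (_ & _ & HA1 & _), hHb as (_ & _ & HB1 & _).
  destruct hHb' as (_ & _ & HB1' & _).
  pose proof (cube_coord0 t Ht).
  unfold append_htpy, chain, stretch; cbv zeta.
  replace (t 0%nat * (1 + 3 * 1)) with (4 * t 0%nat) by ring. rewrite !Rmult_1_r.
  repeat destruct (Rle_dec (4 * t 0%nat) _); try lra.
  - apply HA1, cube_upd0; auto; lra.
  - unfold glue. destruct (Rle_dec _ 0); [| lra].
    rewrite Ropp_involutive. apply HB1, cube_upd0; auto; lra.
  - apply glue_bd; [lra |]. apply cube_bd_upd0; auto; lra.
  - unfold glue. destruct (Rle_dec _ 0); [lra |]. apply HB1', cube_upd0; auto; lra.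
Qed.

Lemma is_htpy_append : is_htpy X d x0 n append_htpy a0 (chain alpha beta beta').
Proof.
  split; [exact jcont_append|].
  split; [exact append_htpy_0|]. split; [exact append_htpy_1 | exact append_htpy_bd].
Qed.

(* At time [s], [Hb s] is run up to height [s] and back down before [Hc s] starts. *)
Definition prepend_htpy (s : R) (t : nat -> R) : X :=
  let u := stretch s t in
  if Rle_dec u s then Hb s (upd t 0 u)
  else if Rle_dec u (2 * s) then Hb s (upd t 0 (2 * s - u))
  else if Rle_dec u (3 * s) then x0
  else Hc s (upd t 0 (u - 3 * s)).

Lemma jcont_prepend : jcont n d (cyl n 0) prepend_htpy.
Proof.
  destruct hHb as (HcB & _ & _ & HbdB), hHc as (HcC & _ & _ & HbdC).
  unfold prepend_htpy; cbv zeta.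
  apply jcont_paste; [solve_jcontR | solve_jcontR | | |].
  - apply (jcont_comp _ _ _ (cyl n 0) Hb (fun s _ => s) (fun s t => upd t 0 (stretch s t)));
      [exact HcB | apply jcontR_fst | apply jcontV_upd; solve_jcontR | solve_domain].
  - apply jcont_paste; [solve_jcontR | solve_jcontR | | |].
    + apply (jcont_comp _ _ _ (cyl n 0) Hb (fun s _ => s)
        (fun s t => upd t 0 (2 * s - stretch s t)));
        [exact HcB | apply jcontR_fst | apply jcontV_upd; solve_jcontR | solve_domain].
    + apply jcont_paste; [solve_jcontR | solve_jcontR | apply jcont_const | |].
      * apply (jcont_comp _ _ _ (cyl n 0) Hc (fun s _ => s)
          (fun s t => upd t 0 (stretch s t - 3 * s)));
          [exact HcC | apply jcontR_fst | apply jcontV_upd; solve_jcontR | solve_domain].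
      * intros s t [[[Hs Ht] _] _] ->. rewrite Rminus_diag, HbdC; auto.
        apply cube_bd_upd0; auto; lra.
    + intros s t [[Hs Ht] _] ->. destruct (Rle_dec _ _); [| lra].
      replace (2 * s - 2 * s) with 0 by ring. apply HbdB; auto. apply cube_bd_upd0; auto; lra.
  - intros s t [Hs Ht] ->. destruct (Rle_dec _ _); [| lra]. f_equal. f_equal. ring.
Qed.

Lemma prepend_htpy_bd s t : 0 <= s <= 1 -> cube_bd n t -> prepend_htpy s t = x0.
Proof.
  intros Hs Hbd. destruct hHb as (_ & _ & _ & HbdB), hHc as (_ & _ & _ & HbdC).
  pose proof (proj1 Hbd) as Ht. pose proof (stretch_bounds s t Hs Ht).
  pose proof (stretch_bd_cases s t Hbd) as Hface.
  unfold prepend_htpy; cbv zeta.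
  repeat destruct (Rle_dec _ _); try reflexivity;
    first [apply HbdB | apply HbdC]; try lra; apply cube_bd_upd0; auto;
    try lra; destruct Hface as [|[|]]; auto; right; lra.
Qed.

Lemma prepend_htpy_0 t : cube n t -> prepend_htpy 0 t = c0 t.
Proof.
  intros Ht. destruct hHb as (_ & _ & _ & HbdB), hHc as (_ & HC0 & _ & HbdC).
  pose proof (cube_coord0 t Ht). unfold prepend_htpy, stretch; cbv zeta.
  rewrite !Rmult_0_r, Rplus_0_r, Rmult_1_r, Rminus_0_r, upd_same.
  destruct (Rle_dec (t 0%nat) 0) as [Hle | Hgt];
    [| repeat destruct (Rle_dec _ _); try lra; auto].
  assert (Hbd : cube_bd n t) by (split; [exact Ht | exists 0%nat; split; [lia | lra]]).
  rewrite <- HC0, HbdB, HbdC; auto; lra.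
Qed.

Lemma prepend_htpy_1 t : cube n t -> prepend_htpy 1 t = chain beta beta gamma t.
Proof.
  intros Ht. destruct hHb as (_ & _ & HB1 & _), hHc as (_ & _ & HC1 & _).
  pose proof (cube_coord0 t Ht).
  unfold prepend_htpy, chain, stretch; cbv zeta.
  replace (t 0%nat * (1 + 3 * 1)) with (4 * t 0%nat) by ring. rewrite !Rmult_1_r.
  repeat destruct (Rle_dec (4 * t 0%nat) _); try lra; try reflexivity;
    [apply HB1 | apply HB1 | apply HC1]; apply cube_upd0; auto; lra.
Qed.

Lemma is_htpy_prepend : is_htpy X d x0 n prepend_htpy c0 (chain beta beta gamma).
Proof.
  split; [exact jcont_prepend|].
  split; [exact prepend_htpy_0|]. split; [exact prepend_htpy_1 | exact prepend_htpy_bd].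
Qed.

End Concatenation.

Lemma homotopic_chain_l (X : Type) (d : X -> X -> R) (x0 : X) (n : nat)
    (a0 b0 alpha beta beta' : (nat -> R) -> X) : (1 <= n)%nat ->
  homotopic d x0 n a0 alpha -> homotopic d x0 n b0 beta -> homotopic d x0 n b0 beta' ->
  homotopic d x0 n a0 (chain X x0 alpha beta beta').
Proof.
  intros hn HA HB HB'. apply homotopic_iff in HA, HB, HB'.
  destruct HA as [Ha hHa], HB as [Hb hHb], HB' as [Hb' hHb'].
  apply homotopic_iff. eexists. eapply is_htpy_append; eauto.
Qed.

Lemma homotopic_chain_r (X : Type) (d : X -> X -> R) (x0 : X) (n : nat)
    (b0 c0 beta gamma : (nat -> R) -> X) : is_metric d -> (1 <= n)%nat ->
  homotopic d x0 n b0 beta -> homotopic d x0 n c0 gamma ->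
  homotopic d x0 n c0 (chain X x0 beta beta gamma).
Proof.
  intros hd hn HB HC. apply homotopic_iff in HB, HC.
  destruct HB as [Hb hHb], HC as [Hc hHc].
  apply homotopic_iff. eexists. eapply is_htpy_prepend; eauto.
Qed.

(** * The distances [mu] and [rho] *)

Lemma Rbar_glb_is_glb (S : Rbar -> Prop) : Rbar_is_glb S (Rbar_glb S).
Proof. exact (proj2_sig (Rbar_ex_glb S)). Qed.

Lemma Rbar_glb_le_plus (S1 S2 : Rbar -> Prop) (z r1 r2 : R) :
  Rbar_glb S1 = Finite r1 -> Rbar_glb S2 = Finite r2 ->
  (forall m, S1 m -> is_finite m) -> (forall m, S2 m -> is_finite m) ->
  (forall x1 x2, S1 (Finite x1) -> S2 (Finite x2) -> z <= x1 + x2) -> z <= r1 + r2.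
Proof.
  intros E1 E2 F1 F2 Hz.
  assert (Hr1 : forall x2, S2 (Finite x2) -> z - x2 <= r1).
  { intros x2 Hx2. change (Rbar_le (z - x2) r1). rewrite <- E1.
    apply Rbar_glb_is_glb. intros m Hm. rewrite <- (F1 m Hm) in Hm |- *.
    specialize (Hz _ _ Hm Hx2). simpl. lra. }
  assert (Hr2 : Rbar_le (z - r1) r2).
  { rewrite <- E2. apply Rbar_glb_is_glb. intros m Hm. rewrite <- (F2 m Hm) in Hm |- *.
    specialize (Hr1 _ Hm). simpl. lra. }
  simpl in Hr2. lra.
Qed.

Section Pseudometric.

Variables (X : Type) (d : X -> X -> R) (x0 : X) (n : nat).
Hypothesis hd : is_metric d.

Lemma mu_le f g (M : R) : (forall t, cube n t -> d (f t) (g t) <= M) -> Rbar_le (mu d n f g) M.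
Proof. intros H. apply Lub_Rbar_correct. intros r [t [Ht ->]]. exact (H t Ht). Qed.

Lemma mu_ge f g t : cube n t -> Rbar_le (d (f t) (g t)) (mu d n f g).
Proof. intros Ht. apply Lub_Rbar_correct. now exists t. Qed.

Lemma mu_finite f g : Omega d x0 n f -> Omega d x0 n g -> exists M, mu d n f g = Finite M.
Proof.
  intros [Hf _] [Hg _].
  destruct (cont_on_cube_bounded d n f x0 hd Hf) as [Bf HBf].
  destruct (cont_on_cube_bounded d n g x0 hd Hg) as [Bg HBg].
  assert (Hup : Rbar_le (mu d n f g) (Bf + Bg)).
  { apply mu_le. intros t Ht. destruct hd as (_ & _ & Hsym & Htri).
    specialize (Htri (f t) x0 (g t)). rewrite (Hsym x0) in Htri.
    specialize (HBf t Ht). specialize (HBg t Ht). lra. }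
  pose proof (mu_ge f g _ (cube_zero n)) as Hlow.
  destruct (mu d n f g) as [M| |]; simpl in *; [now exists M | tauto | tauto].
Qed.

Lemma mu_self f : mu d n f f = Finite 0.
Proof.
  destruct hd as (_ & Hd0 & _). apply is_lub_Rbar_unique. split.
  - intros r [t [_ ->]]. simpl. right. now apply Hd0.
  - intros b Hb. apply (Hb 0). exists (fun _ => 0). split; [apply cube_zero|].
    symmetry. now apply Hd0.
Qed.

Lemma mu_sym f g : mu d n f g = mu d n g f.
Proof.
  destruct hd as (_ & _ & Hsym & _). apply Lub_Rbar_eqset.
  intros r; split; intros [t [Ht ->]]; exists t; auto.
Qed.

Lemma pi_n_rep (a : pi_n d x0 n) :
  exists a0, Omega d x0 n a0 /\ forall f, proj1_sig a f <-> homotopic d x0 n a0 f.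
Proof.
  destruct a as [A [a0 [Ha0 ->]]]. exists a0. split; [exact Ha0|]. intros f. simpl.
  split; [tauto|]. intros Hf. split; [eapply homotopic_Omega; eauto | exact Hf].
Qed.

Lemma pi_n_inhabited (a : pi_n d x0 n) : exists f, proj1_sig a f.
Proof.
  destruct (pi_n_rep a) as [a0 [Ha0 Hmem]]. exists a0. apply Hmem, homotopic_refl, Ha0.
Qed.

Lemma pi_n_Omega (a : pi_n d x0 n) f : proj1_sig a f -> Omega d x0 n f.
Proof. destruct a as [A [a0 [Ha0 ->]]]. now intros [Hf _]. Qed.

Lemma rho_le_mu (a b : pi_n d x0 n) f g :
  proj1_sig a f -> proj1_sig b g -> Rbar_le (rho d x0 n a b) (mu d n f g).
Proof. intros Hf Hg. apply Rbar_glb_is_glb. now exists f, g. Qed.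

Lemma rho_ge_0 (a b : pi_n d x0 n) : Rbar_le 0 (rho d x0 n a b).
Proof.
  apply Rbar_glb_is_glb. intros m (f & g & _ & _ & ->).
  eapply Rbar_le_trans; [| apply (mu_ge f g _ (cube_zero n))]. apply hd.
Qed.

Lemma rho_finite (a b : pi_n d x0 n) : exists r, rho d x0 n a b = Finite r /\ 0 <= r.
Proof.
  destruct (pi_n_inhabited a) as [f Hf], (pi_n_inhabited b) as [g Hg].
  destruct (mu_finite f g (pi_n_Omega a f Hf) (pi_n_Omega b g Hg)) as [M HM].
  pose proof (rho_le_mu a b f g Hf Hg) as Hup. rewrite HM in Hup.
  pose proof (rho_ge_0 a b) as Hlow.
  destruct (rho d x0 n a b) as [r| |]; simpl in *; [now exists r | tauto | tauto].
Qed.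

Lemma rho_self (a : pi_n d x0 n) : rho d x0 n a a = Finite 0.
Proof.
  destruct (rho_finite a a) as [r [Hr Hr0]]. rewrite Hr. f_equal.
  destruct (pi_n_inhabited a) as [f Hf].
  pose proof (rho_le_mu a a f f Hf Hf) as Hle. rewrite Hr, mu_self in Hle. simpl in Hle. lra.
Qed.

Lemma rho_sym (a b : pi_n d x0 n) : rho d x0 n a b = rho d x0 n b a.
Proof.
  apply Rbar_glb_rw. intros m.
  split; intros (f & g & Hf & Hg & ->); exists g, f; rewrite mu_sym; auto.
Qed.

Hypothesis hn : (1 <= n)%nat.

Lemma rho_le_mu_plus (a b c : pi_n d x0 n) f g g' h :
  proj1_sig a f -> proj1_sig b g -> proj1_sig b g' -> proj1_sig c h ->
  Rbar_le (rho d x0 n a c) (Rbar_plus (mu d n f g) (mu d n g' h)).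
Proof.
  intros Hf Hg Hg' Hh.
  destruct (pi_n_rep a) as [a0 [_ Ha]], (pi_n_rep b) as [b0 [_ Hb]], (pi_n_rep c) as [c0 [_ Hc]].
  destruct (mu_finite f g (pi_n_Omega a f Hf) (pi_n_Omega b g Hg)) as [M1 HM1].
  destruct (mu_finite g' h (pi_n_Omega b g' Hg') (pi_n_Omega c h Hh)) as [M2 HM2].
  assert (Hfg : forall t, cube n t -> d (f t) (g t) <= M1).
  { intros t Ht. pose proof (mu_ge f g t Ht) as Hle. now rewrite HM1 in Hle. }
  assert (Hgh : forall t, cube n t -> d (g' t) (h t) <= M2).
  { intros t Ht. pose proof (mu_ge g' h t Ht) as Hle. now rewrite HM2 in Hle. }
  assert (HM1pos : 0 <= M1) by (eapply Rle_trans; [apply hd | apply (Hfg _ (cube_zero n))]).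
  assert (HM2pos : 0 <= M2) by (eapply Rle_trans; [apply hd | apply (Hgh _ (cube_zero n))]).
  rewrite HM1, HM2. eapply Rbar_le_trans.
  - apply (rho_le_mu a c (chain X x0 f g g') (chain X x0 g g h)).
    + apply Ha, (homotopic_chain_l _ _ _ _ _ b0); [exact hn | apply Ha | apply Hb | apply Hb];
        assumption.
    + apply Hc, (homotopic_chain_r _ _ _ _ b0); [exact hd | exact hn | apply Hb | apply Hc];
        assumption.
  - apply mu_le, chain_dist; assumption.
Qed.

Lemma rho_triangle (a b c : pi_n d x0 n) :
  Rbar_le (rho d x0 n a c) (Rbar_plus (rho d x0 n a b) (rho d x0 n b c)).
Proof.
  destruct (rho_finite a b) as [r1 [E1 _]], (rho_finite b c) as [r2 [E2 _]],
    (rho_finite a c) as [r3 [E3 _]].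
  rewrite E1, E2, E3. simpl. apply (Rbar_glb_le_plus _ _ r3 r1 r2 E1 E2).
  - intros m (f & g & Hf & Hg & ->).
    now destruct (mu_finite f g (pi_n_Omega a f Hf) (pi_n_Omega b g Hg)) as [M ->].
  - intros m (f & g & Hf & Hg & ->).
    now destruct (mu_finite f g (pi_n_Omega b f Hf) (pi_n_Omega c g Hg)) as [M ->].
  - intros x1 x2 (f & g & Hf & Hg & Ex1) (g' & h & Hg' & Hh & Ex2).
    pose proof (rho_le_mu_plus a b c f g g' h Hf Hg Hg' Hh) as Hle.
    rewrite E3, <- Ex1, <- Ex2 in Hle. exact Hle.
Qed.

End Pseudometric.

Theorem theorem4p5 (X : Type) (d : X -> X -> R) (x0 : X) (n : nat)
  (hd : is_metric d) (hn : (1 <= n)%nat) :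
  (forall a b : pi_n d x0 n, exists r : R, rho d x0 n a b = Finite r /\ 0 <= r) /\
  (forall a : pi_n d x0 n, rho d x0 n a a = Finite 0) /\
  (forall a b : pi_n d x0 n, rho d x0 n a b = rho d x0 n b a) /\
  (forall a b c : pi_n d x0 n,
     Rbar_le (rho d x0 n a c) (Rbar_plus (rho d x0 n a b) (rho d x0 n b c))).
Proof.
  split; [|split; [|split]].
  - exact (rho_finite X d x0 n hd).
  - exact (rho_self X d x0 n hd).
  - exact (rho_sym X d x0 n hd).
  - exact (rho_triangle X d x0 n hd hn).
Qed.
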